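(* Let $f\colon A\to B$, $a\colon A\to A$ and $b\colon B\to B$ be morphisms in a pre-Hilbert $*$-category with $a\succ 0$ and $b\succ 0$. Then \[ f^*b^{-1}f\leq a \iff fa^{-1}f^*\leq b \qquad\text{and}\qquad f^*b^{-1}f\prec a \iff fa^{-1}f^*\prec b. \]
   Context: A $*$-category is a category with a choice of $f^*\colon Y\to X$ for each $f\colon X\to Y$ such that $1^*=1$, $(gf)^*=f^*g^*$, $(f^* )^*=f$. A pre-Hilbert $*$-category is a $*$-category with (R1) a zero object, (R2) orthonormal biproducts of all pairs of objects (biproducts $(X,s_1,r_1,s_2,r_2)$ with $r_k=s_k^*$), (R3) an isometric kernel (kernel $m$ with $m^*m=1$) for every morphism, and (R4) every diagonal $\Delta\colon X\to X\oplus X$ a kernel of some morphism; such a category is additive. For Hermitian endomorphisms ($c^*=c$) $c,d$ of an object $A$, $c\leq d$ means $d-c=y^*y$ for some object $Y$ and $y\colon A\to Y$; $c\prec d$ (also written $d\succ c$) means $c\leq d$ and $d-c$ is invertible. *)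

From HB Require Import structures.
From mathcomp Require Import all_boot all_algebra.
Set Implicit Arguments. Unset Strict Implicit. Unset Printing Implicit Defensive.
Import GRing.Theory.
Local Open Scope ring_scope.

(* A *-category whose arr-sets carry an abelian-group structure for which
   composition is bilinear (a pre-Hilbert
   *-category is additive, with a unique such enrichment). *)
Record StarCat := {
  ob :> Type;
  arr : ob -> ob -> zmodType;
  cc : forall X Y Z : ob, arr Y Z -> arr X Y -> arr X Z;
  idm : forall X : ob, arr X X;
  dag : forall X Y : ob, arr X Y -> arr Y X;
  compA : forall X Y Z W (h : arr Z W) (g : arr Y Z) (f : arr X Y),
      cc h (cc g f) = cc (cc h g) f;
  comp1f : forall X Y (f : arr X Y), cc (idm Y) f = f;
  compf1 : forall X Y (f : arr X Y), cc f (idm X) = f;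
  compDl : forall X Y Z (g1 g2 : arr Y Z) (f : arr X Y),
      cc (g1 + g2) f = cc g1 f + cc g2 f;
  compDr : forall X Y Z (g : arr Y Z) (f1 f2 : arr X Y),
      cc g (f1 + f2) = cc g f1 + cc g f2;
  star1 : forall X, dag (idm X) = idm X;
  starM : forall X Y Z (g : arr Y Z) (f : arr X Y),
      dag (cc g f) = cc (dag f) (dag g);
  starK : forall X Y (f : arr X Y), dag (dag f) = f
}.

Arguments cc {s X Y Z}.
Arguments idm {s}.
Arguments dag {s X Y}.

Section Defs.
Variable C : StarCat.

Definition is_zero_ob (Z : C) : Prop :=
  forall X : C, (exists f : arr X Z, forall g, g = f) /\
                (exists f : arr Z X, forall g, g = f).

Definition is_biproduct (X Y P : C) (s1 : arr X P) (r1 : arr P X)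
  (s2 : arr Y P) (r2 : arr P Y) : Prop :=
  (forall W (f1 : arr W X) (f2 : arr W Y),
      exists! h : arr W P, cc r1 h = f1 /\ cc r2 h = f2) /\
  (forall W (g1 : arr X W) (g2 : arr Y W),
      exists! h : arr P W, cc h s1 = g1 /\ cc h s2 = g2) /\
  cc r1 s1 = idm X /\ cc r2 s2 = idm Y /\
  cc r1 s2 = 0 /\ cc r2 s1 = 0.

Definition is_orthonormal_biproduct (X Y P : C) (s1 : arr X P) (r1 : arr P X)
  (s2 : arr Y P) (r2 : arr P Y) : Prop :=
  is_biproduct s1 r1 s2 r2 /\ r1 = dag s1 /\ r2 = dag s2.

Definition is_kernel (K X Y : C) (m : arr K X) (f : arr X Y) : Prop :=
  cc f m = 0 /\
  forall W (g : arr W X), cc f g = 0 -> exists! h : arr W K, cc m h = g.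

Definition preHilbert : Prop :=
  (exists Z : C, is_zero_ob Z) /\
  (forall X Y : C, exists (P : C) (s1 : arr X P) (r1 : arr P X)
       (s2 : arr Y P) (r2 : arr P Y), is_orthonormal_biproduct s1 r1 s2 r2) /\
  (forall (X Y : C) (f : arr X Y), exists (K : C) (m : arr K X),
       is_kernel m f /\ cc (dag m) m = idm K) /\
  (forall (X P : C) (s1 : arr X P) (r1 : arr P X) (s2 : arr X P) (r2 : arr P X),
      is_orthonormal_biproduct s1 r1 s2 r2 ->
      forall d : arr X P, cc r1 d = idm X -> cc r2 d = idm X ->
      exists (Y : C) (g : arr P Y), is_kernel d g).

Definition hermitian (A : C) (c : arr A A) : Prop := dag c = c.

Definition invertible (A B : C) (h : arr A B) : Prop :=
  exists g : arr B A, cc g h = idm A /\ cc h g = idm B.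

Definition is_inverse (A B : C) (h : arr A B) (g : arr B A) : Prop :=
  cc g h = idm A /\ cc h g = idm B.

Definition hle (A : C) (c d : arr A A) : Prop :=
  hermitian c /\ hermitian d /\
  exists (Y : C) (y : arr A Y), d - c = cc (dag y) y.

Definition hlt (A : C) (c d : arr A A) : Prop :=
  hle c d /\ invertible (d - c).

End Defs.

(* Put h = f a⁻¹ f†.  If a - f† b⁻¹ f = y†y and b = v†v, then
   b - h = p†p + q†q with p = y a⁻¹ f† and q = v (1 - b⁻¹ h), and a sum of two
   squares is a square, through an orthonormal biproduct.  For the strict order,
   the Woodbury formula (b - h)⁻¹ = b⁻¹ + b⁻¹ f (a - f† b⁻¹ f)⁻¹ f† b⁻¹ provides the
   inverse.  The converse implications are the same statements for f† with a and
   b exchanged.  Additivity of the dagger, which these computations need, is not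
   an axiom: it follows from f + g = ∇ (s1 f + s2 g) and 1 = s1 s1† + s2 s2†,
   where ∇ is the codiagonal of an orthonormal biproduct. *)

From Pilot Require Import Defs.
From mathcomp Require Import all_boot all_algebra.
Import GRing.Theory.
Local Open Scope ring_scope.
Set Implicit Arguments. Unset Strict Implicit.

Local Notation "g ∘ f" := (cc g f) (at level 40, left associativity).
Local Notation "f ^†" := (dag f) (at level 2, format "f ^†").
Local Notation compA := (@Defs.compA _).

Definition has_orthonormal_biproducts (C : StarCat) : Prop :=
  forall X Y : C, exists (P : C) (s1 : arr X P) (r1 : arr P X)
    (s2 : arr Y P) (r2 : arr P Y), is_orthonormal_biproduct s1 r1 s2 r2.

Section Composition.
Variable C : StarCat.
Implicit Types X Y Z W : C.

Lemma comp0l X Y Z (f : arr X Y) : (0 : arr Y Z) ∘ f = 0.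
Proof. by apply: (addrI (0 ∘ f)); rewrite -compDl !addr0. Qed.

Lemma comp0r X Y Z (g : arr Y Z) : g ∘ (0 : arr X Y) = 0.
Proof. by apply: (addrI (g ∘ 0)); rewrite -compDr !addr0. Qed.

Lemma compNl X Y Z (g : arr Y Z) (f : arr X Y) : (- g) ∘ f = - (g ∘ f).
Proof. by apply: (addrI (g ∘ f)); rewrite -compDl !subrr comp0l. Qed.

Lemma compNr X Y Z (g : arr Y Z) (f : arr X Y) : g ∘ (- f) = - (g ∘ f).
Proof. by apply: (addrI (g ∘ f)); rewrite -compDr !subrr comp0r. Qed.

Lemma compBl X Y Z (g1 g2 : arr Y Z) (f : arr X Y) : (g1 - g2) ∘ f = g1 ∘ f - g2 ∘ f.
Proof. by rewrite compDl compNl. Qed.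

Lemma compBr X Y Z (g : arr Y Z) (f1 f2 : arr X Y) : g ∘ (f1 - f2) = g ∘ f1 - g ∘ f2.
Proof. by rewrite compDr compNr. Qed.

Lemma compK X Y W (h : arr X Y) (g : arr Y X) (k : arr Y W) :
  is_inverse h g -> k ∘ h ∘ g = k.
Proof. by case=> _ hg; rewrite -compA hg compf1. Qed.

Lemma compVK X Y W (h : arr X Y) (g : arr Y X) (k : arr X W) :
  is_inverse h g -> k ∘ g ∘ h = k.
Proof. by case=> gh _; rewrite -compA gh compf1. Qed.

Lemma inverse_hermitian X (a a' : arr X X) :
  Defs.hermitian a -> is_inverse a a' -> Defs.hermitian a'.
Proof.
move=> ha [a'a aa']; have a'_a : a'^† ∘ a = idm X by rewrite -ha -starM aa' star1.
by rewrite /Defs.hermitian -[a'^†]compf1 -aa' compA a'_a comp1f.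
Qed.

End Composition.

Ltac comp_norm :=
  repeat progress rewrite ?compDl ?compDr ?compBl ?compBr ?compNl ?compNr
    ?Defs.compA ?comp1f ?compf1 ?comp0l ?comp0r.

Section Dagger.
Variable C : StarCat.
Hypothesis biprodC : has_orthonormal_biproducts C.
Implicit Types X Y Z W : C.

Lemma orthonormal_biproduct_split X Y P (s1 : arr X P) (s2 : arr Y P) :
  is_orthonormal_biproduct s1 s1^† s2 s2^† -> s1 ∘ s1^† + s2 ∘ s2^† = idm P.
Proof.
move=> [[univ [_ [e11 [e22 [e12 e21]]]]] _].
have [h [_ h_uniq]] := univ P s1^† s2^†.
rewrite -(h_uniq (idm P)) ?compf1 //; apply/esym/h_uniq.
by split; rewrite !compDr !compA ?e11 ?e22 ?e12 ?e21 !comp0l !comp1f ?addr0 ?add0r.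
Qed.

Lemma dagD X Y (f g : arr X Y) : (f + g)^† = f^† + g^†.
Proof.
have [P [s1 [r1 [s2 [r2 biprod]]]]] := biprodC Y Y.
have [[_ [couniv [e11 [e22 [e12 e21]]]]] [E1 E2]] := biprod; subst r1 r2.
have [n [[ns1 ns2] _]] := couniv Y (idm Y) (idm Y).
have sum_n : f + g = n ∘ (s1 ∘ f + s2 ∘ g) by rewrite compDr !compA ns1 ns2 !comp1f.
have pair_s1 : (s1 ∘ f + s2 ∘ g)^† ∘ s1 = f^†.
  by rewrite -[LHS]starK starM starK compDr !compA e11 e12 comp1f comp0l addr0.
have pair_s2 : (s1 ∘ f + s2 ∘ g)^† ∘ s2 = g^†.
  by rewrite -[LHS]starK starM starK compDr !compA e21 e22 comp1f comp0l add0r.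
rewrite sum_n starM -[(s1 ∘ f + s2 ∘ g)^†]compf1 -(orthonormal_biproduct_split biprod).
rewrite compDr !compA pair_s1 pair_s2 compDl -!compA -!(starM n).
by rewrite ns1 ns2 star1 !compf1.
Qed.

Lemma dag0 X Y : (0 : arr X Y)^† = 0.
Proof. by apply: (addrI 0^†); rewrite -dagD !addr0. Qed.

Lemma dagN X Y (f : arr X Y) : (- f)^† = - f^†.
Proof. by apply: (addrI f^†); rewrite -dagD !subrr dag0. Qed.

Lemma dagB X Y (f g : arr X Y) : (f - g)^† = f^† - g^†.
Proof. by rewrite dagD dagN. Qed.

Lemma sum_of_squares X Y Z (p : arr X Y) (q : arr X Z) :
  exists (W : C) (w : arr X W), p^† ∘ p + q^† ∘ q = w^† ∘ w.
Proof.
have [P [s1 [r1 [s2 [r2 [[_ [_ [e11 [e22 [e12 e21]]]]] [E1 E2]]]]]]] := biprodC Y Z.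
subst r1 r2; exists P, (s1 ∘ p + s2 ∘ q).
rewrite dagD !starM; comp_norm.
rewrite -!(compA _ s1^†) -!(compA _ s2^†) e11 e22 e12 e21.
by comp_norm; rewrite addr0 add0r.
Qed.

End Dagger.

Section Schur.
Variable C : StarCat.
Hypothesis biprodC : has_orthonormal_biproducts C.
Variables (A B : C) (f : arr A B) (a a' : arr A A) (b b' : arr B B).
Hypotheses (inv_a : is_inverse a a') (inv_b : is_inverse b b').

Lemma schur_complement_sum_squares Y V (y : arr A Y) (v : arr B V) :
    Defs.hermitian a -> b = v^† ∘ v -> a - f^† ∘ b' ∘ f = y^† ∘ y ->
  b - f ∘ a' ∘ f^† = (y ∘ a' ∘ f^†)^† ∘ (y ∘ a' ∘ f^†)
    + (v ∘ (idm B - b' ∘ f ∘ a' ∘ f^†))^† ∘ (v ∘ (idm B - b' ∘ f ∘ a' ∘ f^†)).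
Proof.
move=> herm_a def_b def_y.
have herm_a' := inverse_hermitian herm_a inv_a.
have herm_b : Defs.hermitian b by rewrite /Defs.hermitian def_b starM starK.
have herm_b' := inverse_hermitian herm_b inv_b.
set h := f ∘ a' ∘ f^†.
have herm_h : h^† = h by rewrite /h !starM starK herm_a' compA.
have sq_p : (y ∘ a' ∘ f^†)^† ∘ (y ∘ a' ∘ f^†) = h - h ∘ b' ∘ h.
  have -> : (y ∘ a' ∘ f^†)^† ∘ (y ∘ a' ∘ f^†) = f ∘ a' ∘ (y^† ∘ y) ∘ a' ∘ f^†.
    by rewrite !starM starK herm_a'; comp_norm.
  by rewrite -def_y /h; comp_norm; rewrite (compVK _ inv_a).
have sq_q : (v ∘ (idm B - b' ∘ f ∘ a' ∘ f^†))^† ∘ (v ∘ (idm B - b' ∘ f ∘ a' ∘ f^†))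
    = b - h - (h - h ∘ b' ∘ h).
  have -> : (v ∘ (idm B - b' ∘ f ∘ a' ∘ f^†))^† ∘ (v ∘ (idm B - b' ∘ f ∘ a' ∘ f^†))
      = (idm B - b' ∘ h)^† ∘ (v^† ∘ v) ∘ (idm B - b' ∘ h).
    by rewrite /h starM; comp_norm.
  rewrite -def_b (dagB biprodC) star1 starM herm_h herm_b' /h; comp_norm.
  by rewrite (proj2 inv_b) comp1f !(compVK _ inv_b) opprK opprB (addrC (- _)).
by rewrite sq_p sq_q [RHS]addrC subrK.
Qed.

Lemma woodbury t : is_inverse (a - f^† ∘ b' ∘ f) t ->
  is_inverse (b - f ∘ a' ∘ f^†) (b' + b' ∘ f ∘ t ∘ f^† ∘ b').
Proof.
move=> [ts st].
have def_fbf : f^† ∘ b' ∘ f = a - (a - f^† ∘ b' ∘ f) by rewrite subKr.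
have a'_fbf_t W (k : arr A W) : k ∘ a' ∘ f^† ∘ b' ∘ f ∘ t = k ∘ t - k ∘ a'.
  have : a' ∘ (f^† ∘ b' ∘ f) ∘ t = t - a'.
    by rewrite def_fbf compBr compBl (proj1 inv_a) comp1f -compA st compf1.
  by move/(congr1 (cc k)); rewrite compBr; comp_norm.
have t_fbf_a' W (k : arr A W) : k ∘ t ∘ f^† ∘ b' ∘ f ∘ a' = k ∘ t - k ∘ a'.
  have : t ∘ (f^† ∘ b' ∘ f) ∘ a' = t - a'.
    by rewrite def_fbf compBr compBl (compK _ inv_a) ts comp1f.
  by move/(congr1 (cc k)); rewrite compBr; comp_norm.
split; comp_norm.
- rewrite (proj1 inv_b) (compVK _ inv_b) t_fbf_a'; comp_norm.
  by rewrite subKr subrK.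
- rewrite (proj2 inv_b) comp1f a'_fbf_t; comp_norm.
  by rewrite opprB addKr addrK.
Qed.

Lemma hle_schur : Defs.hermitian a -> hle 0 b ->
  hle (f^† ∘ b' ∘ f) a -> hle (f ∘ a' ∘ f^†) b.
Proof.
move=> herm_a [_ [herm_b [V [v def_b]]]] [_ [_ [Y [y def_y]]]].
rewrite subr0 in def_b.
split; last split => //.
  by rewrite /Defs.hermitian !starM starK (inverse_hermitian herm_a inv_a) compA.
have [W [w sum_w]] := sum_of_squares biprodC
  (y ∘ a' ∘ f^†) (v ∘ (idm B - b' ∘ f ∘ a' ∘ f^†)).
by exists W, w; rewrite -sum_w; apply: schur_complement_sum_squares.
Qed.

Lemma hlt_schur : Defs.hermitian a -> hle 0 b ->
  hlt (f^† ∘ b' ∘ f) a -> hlt (f ∘ a' ∘ f^†) b.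
Proof.
move=> herm_a le0b [le_a [t inv_t]].
split; first exact: hle_schur.
by exists (b' + b' ∘ f ∘ t ∘ f^† ∘ b'); apply: woodbury.
Qed.

End Schur.

Theorem proposition6p2 (C : StarCat) (HC : preHilbert C) (A B : C)
  (f : arr A B) (a : arr A A) (b : arr B B)
  (ha : hlt 0 a) (hb : hlt 0 b)
  (ainv : arr A A) (binv : arr B B)
  (hai : is_inverse a ainv) (hbi : is_inverse b binv) :
  (hle (cc (dag f) (cc binv f)) a <-> hle (cc f (cc ainv (dag f))) b) /\
  (hlt (cc (dag f) (cc binv f)) a <-> hlt (cc f (cc ainv (dag f))) b).
Proof.
have biprodC : has_orthonormal_biproducts C := proj1 (proj2 HC).
have [le0a _] := ha; have [_ [herm_a _]] := le0a.
have [le0b _] := hb; have [_ [herm_b _]] := le0b.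
have le_ab := hle_schur biprodC (f := f) hai hbi herm_a le0b.
have le_ba := hle_schur biprodC (f := f^†) hbi hai herm_b le0a.
have lt_ab := hlt_schur biprodC (f := f) hai hbi herm_a le0b.
have lt_ba := hlt_schur biprodC (f := f^†) hbi hai herm_b le0a.
rewrite starK in le_ba lt_ba; rewrite !compA.
by split; split.
Qed.
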